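(* Let $C$ be a binary $[n,k]$ code with $C^\perp\neq\{\bm 0\}$ and $d^\perp:=d(C^\perp)\ge 3$. If $C$ is monomially equivalent to a dual Hamming code, or if $k=n-1$ and $d^\perp=n$ is odd, then $\gamma(C)=k-d^\perp+3$. Otherwise $\gamma(C)\le k-d^\perp+2$.
   Context: An $[n,k]$ code over $\mathbb{F}_q$ is a $k$-dimensional subspace $C\subseteq\mathbb{F}_q^n$; binary means $q=2$; write $E=\{1,\dots,n\}$. For $\bm{x}\in\mathbb{F}_q^n$, $\mathrm{supp}(\bm{x})=\{i: x_i\neq 0\}$ and the weight is $|\mathrm{supp}(\bm{x})|$; for $B\subseteq\mathbb{F}_q^n$, $\mathrm{Supp}(B)=\bigcup_{\bm{x}\in B}\mathrm{supp}(\bm{x})$. $C^\perp$ is the dual code with respect to the standard inner product and $d(C^\perp)$ is the minimum weight of a nonzero codeword of $C^\perp$. The covering dimension is $\gamma(C)=\infty$ if $\mathrm{Supp}(C)\neq E$, and otherwise $\gamma(C)$ is the least positive integer $r$ such that $C$ has an $r$-dimensional subspace $D$ with $\mathrm{Supp}(D)=E$. A dual Hamming code is an $[(q^k-1)/(q-1),k]$ code over $\mathbb{F}_q$ with a generator matrix whose columns consist of exactly one nonzero vector from each one-dimensional subspace of $\mathbb{F}_q^k$. Two codes are monomially equivalent if one is obtained from the other by permuting coordinates and multiplying coordinates by nonzero scalars. *)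

From HB Require Import structures.
From mathcomp Require Import all_boot all_order all_algebra all_fingroup.
Set Implicit Arguments. Unset Strict Implicit. Unset Printing Implicit Defensive.
Import GRing.Theory.
Local Open Scope ring_scope.

Definition supp n (x : 'rV['F_2]_n) : {set 'I_n} := [set i | x 0 i != 0].

Definition wt n (x : 'rV['F_2]_n) : nat := #|supp x|.

Definition Supp n (B : {vspace 'rV['F_2]_n}) : {set 'I_n} :=
  [set i | [exists x : 'rV['F_2]_n, (x \in B) && (x 0 i != 0)]].

Definition in_dual n (C : {vspace 'rV['F_2]_n}) (y : 'rV['F_2]_n) : bool :=
  [forall x : 'rV['F_2]_n, (x \in C) ==> (\sum_i x 0 i * y 0 i == 0)].

Definition dual_min_dist n (C : {vspace 'rV['F_2]_n}) (d : nat) : Prop :=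
  (exists y, [/\ in_dual C y, y != 0 & wt y = d]) /\
  (forall y, in_dual C y -> y != 0 -> (d <= wt y)%N).

(* covering_dim C r : gamma(C) = r (finite). gamma(C) = infinity iff no r satisfies it. *)
Definition covering_dim n (C : {vspace 'rV['F_2]_n}) (r : nat) : Prop :=
  [/\ Supp C = [set: 'I_n], (0 < r)%N,
      (exists D : {vspace 'rV['F_2]_n}, [/\ (D <= C)%VS, \dim D = r & Supp D = [set: 'I_n]]) &
      (forall D : {vspace 'rV['F_2]_n}, (D <= C)%VS -> (0 < \dim D)%N ->
          Supp D = [set: 'I_n] -> (r <= \dim D)%N)].

(* binary dual Hamming code of length n, dimension m: generated by the rows of a
   generator matrix G whose columns are exactly the nonzero vectors of F_2^m, each
   once (over F_2 each 1-dim subspace has exactly one nonzero vector). *)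
Definition dual_Hamming n (H : {vspace 'rV['F_2]_n}) : Prop :=
  exists (m : nat) (G : 'M['F_2]_(m, n)),
    [/\ n = (2 ^ m - 1)%N,
        H = <<[seq row i G | i : 'I_m]>>%VS,
        (forall j, col j G != 0),
        injective (fun j => col j G) &
        (forall v : 'cV['F_2]_m, v != 0 -> exists j, col j G = v)].

Definition permute n (s : 'S_n) (x : 'rV['F_2]_n) : 'rV['F_2]_n := \row_j x 0 (s j).

(* monomial equivalence over F_2 (nonzero scalars are all 1: only permutations) *)
Definition mon_equiv n (C H : {vspace 'rV['F_2]_n}) : Prop :=
  exists s : 'S_n, forall x, (x \in C) = (permute s x \in H).

(* Let d be the dual distance.  If |A| < d, no nonzero dual word is supported
   in A, so every pattern on A is the restriction of a codeword; hence the
   codewords constant on A form a subcode of codimension |A| - 1, and it covers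
   a coordinate i unless i |: A is the support of a dual word of odd weight d.
   Sets A of size d - 2 always work, giving gamma <= k - d + 3; sets of size
   d - 1 work when d is even or when some (d-1)-set extends to no dual word of
   weight d, giving gamma <= k - d + 2.  If d is odd and every (d-1)-set does
   extend, then either d = 3 and the weight-3 dual words form a Steiner triple
   system, which makes the columns of a generator matrix all nonzero vectors
   (a dual Hamming code), or d >= 5, and adding two such dual words shows d = n,
   so C is the even weight code of odd length.  In these two cases the bound
   k - d + 3 is attained: in the dual Hamming code every dual word of a proper
   subcode reduces along Steiner triples to a weight-one dual word, and the
   all-one word, the only candidate for a covering line, has odd weight. *)
From HB Require Import structures.
From mathcomp Require Import all_boot all_order all_algebra all_fingroup all_field.
From mathcomp Require Import zify.
From Stdlib Require Import Classical Wf_nat.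
Set Implicit Arguments. Unset Strict Implicit. Unset Printing Implicit Defensive.
Import GRing.Theory.
Local Open Scope ring_scope.

Lemma F2_neq0_eq1 (a : 'F_2) : a != 0 -> a = 1.
Proof. by case: a => [[|[|m]] // ?] _; apply: val_inj. Qed.

Lemma F2_natr_odd m : (m%:R : 'F_2) = (odd m)%:R.
Proof. by rewrite -modn2 Fp_nat_mod. Qed.

Lemma addmx_F2 m p (v : 'M['F_2]_(m, p)) : v + v = 0.
Proof. by apply/matrixP => i j; rewrite !mxE addrr_pchar2 // pchar_Fp. Qed.

Lemma kermx_trK (F : fieldType) m p (N : 'M[F]_(m, p)) : (N == kermx (kermx N^T)^T)%MS.
Proof.
have sNK : (N <= kermx (kermx N^T)^T)%MS.
  by rewrite sub_kermx -[N in N *m _]trmxK -trmx_mul mulmx_ker trmx0.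
rewrite -(mxrank_leqif_eq sNK).2.
by rewrite mxrank_ker mxrank_tr mxrank_ker mxrank_tr subKn ?rank_leq_col.
Qed.

Lemma exists_subset_card (T : finType) (B : {set T}) k :
  (k <= #|B|)%N -> exists2 A : {set T}, A \subset B & #|A| = k.
Proof.
move=> kB; exists [set x in take k (enum B)].
  by apply/subsetP => x; rewrite inE => /mem_take; rewrite mem_enum.
by rewrite cardsE (card_uniqP _) ?take_uniq ?enum_uniq // size_takel // -cardE.
Qed.

Lemma exists_set_card (T : finType) k : (k <= #|T|)%N -> exists A : {set T}, #|A| = k.
Proof.
move=> kT; have [|A _ cardA] := @exists_subset_card T [set: T] k; last by exists A.
by rewrite cardsT.
Qed.

Section DualCode.
Variable n : nat.
Implicit Types (C D : {vspace 'rV['F_2]_n}) (x y : 'rV['F_2]_n) (B : {set 'I_n}).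

Definition dot x y : 'F_2 := \sum_i x 0 i * y 0 i.

Definition indv B : 'rV['F_2]_n := \row_j (j \in B)%:R.

Lemma in_dualP C y : reflect (forall x, x \in C -> dot x y = 0) (in_dual C y).
Proof.
apply: (iffP forallP) => [H x xC | H x]; first by have := H x; rewrite xC => /eqP.
by apply/implyP => /H /eqP.
Qed.

Lemma dotDr x y1 y2 : dot x (y1 + y2) = dot x y1 + dot x y2.
Proof. by rewrite /dot -big_split; apply: eq_bigr => i _; rewrite mxE mulrDr. Qed.

Lemma dot0r x : dot x 0 = 0.
Proof. by rewrite /dot big1 // => i _; rewrite mxE mulr0. Qed.

Lemma in_dual0 C : in_dual C 0.
Proof. by apply/in_dualP => x _; rewrite dot0r. Qed.

Lemma in_dualD C y1 y2 : in_dual C y1 -> in_dual C y2 -> in_dual C (y1 + y2).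
Proof.
by move=> /in_dualP H1 /in_dualP H2; apply/in_dualP => x xC; rewrite dotDr H1 ?H2 ?addr0.
Qed.

Lemma in_dualS C D y : (D <= C)%VS -> in_dual C y -> in_dual D y.
Proof. by move=> /subvP sDC /in_dualP H; apply/in_dualP => x /sDC /H. Qed.

Lemma indv_supp y : indv (supp y) = y.
Proof. by apply/rowP => j; rewrite !mxE inE; case: eqP => [-> | /eqP/F2_neq0_eq1 ->]. Qed.

Lemma supp_indv B : supp (indv B) = B.
Proof. by apply/setP => j; rewrite inE mxE; case: (j \in B). Qed.

Lemma wt_indv B : wt (indv B) = #|B|.
Proof. by rewrite /wt supp_indv. Qed.

Lemma wt_eq0 y : (wt y == 0%N) = (y == 0).
Proof.
rewrite /wt cards_eq0; apply/eqP/eqP => [y0 | ->].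
  by rewrite -(indv_supp y) y0; apply/rowP => j; rewrite !mxE inE.
by apply/setP => j; rewrite !inE mxE eqxx.
Qed.

Lemma indv_neq0 B j : j \in B -> indv B != 0.
Proof. by move=> jB; apply/eqP => /rowP /(_ j); rewrite !mxE jB => /eqP. Qed.

Lemma dot_indv x B : dot x (indv B) = \sum_(j in B) x 0 j.
Proof.
rewrite /dot (bigID (mem B)) /= [X in _ + X]big1 ?addr0 => [|j /negbTE jB].
  by apply: eq_bigr => j jB; rewrite mxE jB mulr1.
by rewrite mxE jB mulr0.
Qed.

Lemma dot_indvv B : dot (indv B) (indv B) = (odd #|B|)%:R.
Proof.
rewrite dot_indv -F2_natr_odd -sumr_const; apply: eq_bigr => j jB.
by rewrite mxE jB.
Qed.

Section MinimumDistance.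
Variables (C : {vspace 'rV['F_2]_n}) (d : nat).
Hypothesis dC : dual_min_dist C d.

Lemma dual_min_dist_le y : in_dual C y -> y != 0 -> (d <= wt y)%N.
Proof. by case: dC => _; apply. Qed.

Lemma dual_indv_card B j : in_dual C (indv B) -> j \in B -> (d <= #|B|)%N.
Proof. by move=> CB jB; rewrite -wt_indv dual_min_dist_le // (indv_neq0 jB). Qed.

Lemma dual_supported_in B y :
  in_dual C y -> y != 0 -> (forall j, j \notin B -> y 0 j = 0) -> (#|B| <= d)%N ->
  y = indv B /\ #|B| = d.
Proof.
move=> Cy y_neq0 yB Bd.
have syB : supp y \subset B.
  by apply/subsetP => j; rewrite inE; apply: contraR => /yB ->.
have dy : (d <= #|supp y|)%N := dual_min_dist_le Cy y_neq0.
have eyB : supp y = B by apply/eqP; rewrite eqEcard syB (leq_trans Bd dy).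
by rewrite -(indv_supp y) eyB; split => //; move: dy; rewrite eyB; lia.
Qed.

Lemma exists_dual_min_weight : exists y, [/\ in_dual C y, y != 0 & #|supp y| = d].
Proof. by case: dC => [[y [Cy y0 wy]] _]; exists y. Qed.

Lemma dual_min_dist_leq : (d <= n)%N.
Proof.
have [y [_ _ <-]] := exists_dual_min_weight.
by rewrite -[n in (_ <= n)%N]card_ord max_card.
Qed.

End MinimumDistance.

Definition row_space C m (N : 'M['F_2]_(m, n)) := forall x, (x \in C) = (x <= N)%MS.

Definition basis_mx C : 'M['F_2]_(\dim C, n) := \matrix_(i < \dim C) (vbasis C)`_i.

Lemma row_space_basis_mx C : row_space C (basis_mx C).
Proof.
move=> x; apply/idP/idP => [xC | /submxP[u ->]].
  apply/submxP; exists (\row_i coord (vbasis C) i x).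
  rewrite mulmx_sum_row {1}(coord_vbasis xC); apply: eq_bigr => i _.
  by rewrite rowK mxE.
rewrite mulmx_sum_row; apply: memv_suml => i _; apply: memvZ.
by rewrite rowK; apply: vbasis_mem; apply: mem_nth; rewrite size_tuple.
Qed.

Lemma rank_basis_mx C : \rank (basis_mx C) = \dim C.
Proof.
apply/eqP; apply: inj_row_free => v; rewrite mulmx_sum_row => v_bmx0.
have /freeP v0 := basis_free (vbasisP C); apply/rowP => i; rewrite mxE v0 //.
by rewrite -[RHS]v_bmx0; apply: eq_bigr => j _; rewrite rowK.
Qed.

Lemma dim_row_space C m (N : 'M['F_2]_(m, n)) : row_space C N -> \dim C = \rank N.
Proof.
move=> CN; rewrite -rank_basis_mx; apply/eqmx_rank/andP; split; apply/row_subP => i.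
  by rewrite -CN row_space_basis_mx row_sub.
by rewrite -row_space_basis_mx CN row_sub.
Qed.

Lemma row_space_span_rows m (N : 'M['F_2]_(m, n)) : row_space <<[seq row i N | i : 'I_m]>>%VS N.
Proof.
move=> x; apply/idP/idP => [xN | /submxP[u ->]].
  rewrite (coord_span xN); apply: summx_sub => i _; apply: scalemx_sub.
  set X := image_tuple _ _.
  have : X`_i \in X by rewrite mem_nth // size_tuple.
  by case/imageP => j _ ->; apply: row_sub.
rewrite mulmx_sum_row; apply: memv_suml => i _; apply: memvZ.
by apply: memv_span; apply: map_f; apply: mem_enum.
Qed.

Lemma in_dual_row_space C m (N : 'M['F_2]_(m, n)) y :
  row_space C N -> in_dual C y = (y *m N^T == 0).
Proof.
move=> CN; apply/in_dualP/eqP => [H | yN x].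
  apply/rowP => i; rewrite !mxE -[RHS](H (row i N)) ?CN ?row_sub //.
  by apply: eq_bigr => j _; rewrite !mxE mulrC.
rewrite CN => /submxP[u ->].
have -> : dot (u *m N) y = (u *m (y *m N^T)^T) 0 0.
  rewrite trmx_mul trmxK mulmxA [RHS]mxE.
  by apply: eq_bigr => j _; rewrite [y^T _ _]mxE.
by rewrite yN trmx0 mulmx0 mxE.
Qed.

Definition dual_mx C := kermx (basis_mx C)^T.

Lemma in_dual_mxE C y : in_dual C y = (y <= dual_mx C)%MS.
Proof. by rewrite /dual_mx sub_kermx (in_dual_row_space _ (row_space_basis_mx C)). Qed.

Lemma rank_dual_mx C : \rank (dual_mx C) = (n - \dim C)%N.
Proof. by rewrite /dual_mx mxrank_ker mxrank_tr rank_basis_mx. Qed.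

Lemma dim_leq_n C : (\dim C <= n)%N.
Proof. by rewrite -rank_basis_mx rank_leq_col. Qed.

Lemma in_dual_strict C D :
  (\dim D < \dim C)%N -> exists y, in_dual D y /\ ~~ in_dual C y.
Proof.
move=> ltDC; have leCn := dim_leq_n C.
have : ~~ (dual_mx D <= dual_mx C)%MS.
  by apply/negP => /mxrankS; rewrite !rank_dual_mx; lia.
case/row_subPn => i Ki; exists (row i (dual_mx D)).
by rewrite !in_dual_mxE Ki; split; first exact: row_sub.
Qed.

Lemma extend_to_codeword C B t :
  (forall y, in_dual C y -> (forall j, j \notin B -> y 0 j = 0) -> dot t y = 0) ->
  exists2 x, x \in C & forall j, j \in B -> x 0 j = t 0 j.
Proof.
move=> t_perp.
pose P : 'M['F_2]_n := diag_mx (\row_j (j \notin B)%:R).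
have mulP m (u : 'M_(m, n)) i j : (u *m P) i j = u i j * (j \notin B)%:R.
  by rewrite mul_mx_diag !mxE.
pose N := col_mx (basis_mx C) P.
(* The kernel of [N^T] consists of the dual words supported in B, so [t] is
   orthogonal to it and hence lies in the row space of [N]. *)
have /submxP[u tN] : (t <= N)%MS.
  rewrite (eqmxP (kermx_trK N)) sub_kermx; apply/eqP/rowP => i.
  set y := row i (kermx N^T).
  have yN : y *m N^T = 0 by rewrite -row_mul mulmx_ker row0.
  rewrite tr_col_mx mul_mx_row tr_diag_mx in yN.
  have /andP[yC /eqP yP] : (y *m (basis_mx C)^T == 0) && (y *m P == 0).
    by rewrite -row_mx_eq0 yN.
  rewrite !mxE -[RHS](t_perp y) ?(in_dual_row_space _ (row_space_basis_mx C)) // => [|j jB].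
    by rewrite /dot; apply: eq_bigr => j _; rewrite [_^T j i]mxE [y 0 j]mxE.
  by move/rowP/(_ j): yP; rewrite mulP (negbTE jB) mulr1 [RHS]mxE.
exists (lsubmx u *m basis_mx C); first by rewrite row_space_basis_mx submxMl.
have -> : t = lsubmx u *m basis_mx C + rsubmx u *m P by rewrite tN -{1}[u]hsubmxK mul_row_col.
by move=> j jB; rewrite [RHS]mxE mulP jB mulr0 addr0.
Qed.

Lemma in_dual_indv_cols C m (G : 'M['F_2]_(m, n)) B :
  row_space C G -> in_dual C (indv B) = (\sum_(j in B) col j G == 0).
Proof.
move=> CG; rewrite (in_dual_row_space _ CG) -trmx_eq0 trmx_mul trmxK.
suff -> : G *m (indv B)^T = \sum_(j in B) col j G by [].
apply/colP => i; rewrite mxE summxE (bigID (mem B)) /= [X in _ + X]big1 ?addr0.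
  by apply: eq_bigr => j jB; rewrite !mxE jB mulr1.
by move=> j /negbTE jB; rewrite !mxE jB mulr0.
Qed.

End DualCode.

Lemma rank_rowsub1 (F : fieldType) m p (g : 'I_m -> 'I_p) :
  injective g -> \rank (rowsub g (1%:M : 'M[F]_p)) = m.
Proof.
move=> g_inj; apply/eqP; apply: inj_row_free => v /rowP v0; apply/rowP => i.
have := v0 (g i); rewrite !mxE (bigD1 i) //= big1 => [|l /negbTE li].
  by rewrite !mxE eqxx mulr1 addr0.
by rewrite !mxE (inj_eq g_inj) li mulr0.
Qed.

Section ConstantOnBlock.
Variables (n : nat) (A : {set 'I_n}) (a0 : 'I_n).
Implicit Types (C : {vspace 'rV['F_2]_n}) (x : 'rV['F_2]_n).

Definition flat_mx : 'M['F_2]_n :=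
  \matrix_(i, j) if (j \in A) && (j != a0) then (i == j)%:R + (i == a0)%:R else 0.

Lemma flat_mxE x j :
  (x *m flat_mx) 0 j = if (j \in A) && (j != a0) then x 0 j + x 0 a0 else 0.
Proof.
have pick_entry l : \sum_i x 0 i * (i == l)%:R = x 0 l.
  by rewrite (bigD1 l) //= eqxx mulr1 big1 ?addr0 // => i /negbTE ->; rewrite mulr0.
rewrite mxE; case: ifP => Aj; last by rewrite big1 // => i _; rewrite mxE Aj mulr0.
by rewrite -pick_entry -(pick_entry a0) -big_split; apply: eq_bigr => i _; rewrite mxE Aj mulrDr.
Qed.

Definition flat : 'End('rV['F_2]_n) := linfun (mulmxr flat_mx).

Definition constant_part C := (C :&: lker flat)%VS.

Lemma memv_constant_part C x :
  (x \in constant_part C) = (x \in C) && [forall j in A, x 0 j == x 0 a0].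
Proof.
rewrite memv_cap memv_ker lfunE /=; congr (_ && _).
apply/eqP/forall_inP => [/rowP x0 j Aj | xA]; last first.
  apply/rowP => j; rewrite flat_mxE mxE; case: ifP => // /andP[Aj _].
  by rewrite (eqP (xA j Aj)) addrr_pchar2 // pchar_Fp.
have := x0 j; rewrite flat_mxE mxE Aj; case: eqP => [-> //| _ /=].
by rewrite -GRing.subr_pchar2 ?pchar_Fp // => /eqP; rewrite subr_eq0.
Qed.

Variables (C : {vspace 'rV['F_2]_n}) (d : nat).
Hypotheses (dC : dual_min_dist C d) (a0A : a0 \in A) (ltAd : (#|A| < d)%N).

Lemma dual_supported_in_block y : in_dual C y -> (forall j, j \notin A -> y 0 j = 0) -> y = 0.
Proof.
move=> Cy yA; apply/eqP/contraT => y_neq0.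
by have [_] := dual_supported_in dC Cy y_neq0 yA (ltnW ltAd); lia.
Qed.

Lemma dim_constant_part : (\dim (constant_part C) + #|A| <= \dim C + 1)%N.
Proof.
(* The image of C under [flat] contains the unit vectors [e_j], [j \in A :\ a0]. *)
pose E := rowsub (@enum_val _ (mem (A :\ a0))) (1%:M : 'M['F_2]_n).
have dimE : \dim <<[seq row i E | i : 'I_#|A :\ a0|]>> = #|A :\ a0|.
  by rewrite (dim_row_space (row_space_span_rows E)) rank_rowsub1 //; apply: enum_val_inj.
have sE : (<<[seq row i E | i : 'I_#|A :\ a0|]>> <= flat @: C)%VS.
  apply/span_subvP => _ /mapP[i _ ->]; set j := enum_val i.
  have /setD1P[ja0 jA] : j \in A :\ a0 := enum_valP i.
  have [x xC xA] :
      exists2 x : 'rV['F_2]_n, x \in C & forall l, l \in A -> x 0 l = ('e_j : 'rV_n) 0 l.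
    by apply: extend_to_codeword => y Cy yA; rewrite (dual_supported_in_block Cy yA) dot0r.
  apply/memv_imgP; exists x => //; apply/rowP => l.
  rewrite lfunE /= flat_mxE row_rowsub row1 !mxE -/j.
  case: ifP => [/andP[lA la0] | ]; first by rewrite !xA // !mxE [a0 == j]eq_sym (negbTE ja0) addr0.
  by move=> lA; case: (eqVneq l j) => [lj | _]; [move: lA; rewrite lj jA ja0 | rewrite andbF].
have := dimvS sE; rewrite dimE -(limg_ker_dim flat C) (cardsD1 a0 A) a0A add1n.
by rewrite /constant_part -addnA leq_add2l addn1 ltnS.
Qed.

Hypothesis even_completion :
  forall i, i \notin A -> in_dual C (indv (i |: A)) -> ~~ odd #|i |: A|.

Lemma Supp_constant_part : Supp (constant_part C) = [set: 'I_n].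
Proof.
apply/setP => i; rewrite !inE; apply/existsP.
have leiA : (#|i |: A| <= d)%N by rewrite cardsU1 (leq_trans _ ltAd) // -add1n leq_add2r leq_b1.
have [x xC xiA] :
    exists2 x, x \in C & forall j, j \in i |: A -> x 0 j = indv (i |: A) 0 j.
  apply: extend_to_codeword => y Cy yiA.
  have [-> | y_neq0] := eqVneq y 0; first by rewrite dot0r.
  have [ey ciA] := dual_supported_in dC Cy y_neq0 yiA leiA.
  have iA : i \notin A by apply: contraL ltAd => iA; rewrite -ciA cardsU1 iA add0n ltnn.
  have := even_completion iA; rewrite -ey => /(_ Cy).
  by rewrite ey dot_indvv; case: odd.
have x1 j : j \in i |: A -> x 0 j = 1 by move=> jiA; rewrite xiA // mxE jiA.
exists x; rewrite memv_constant_part xC (x1 i (setU11 i A)) andbT /=.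
by apply/forall_inP => j Aj; rewrite !x1 // !inE ?Aj ?a0A orbT.
Qed.

End ConstantOnBlock.

Section CoveringDimension.
Variable n : nat.
Implicit Types (C D : {vspace 'rV['F_2]_n}).

Lemma Supp_subset C D : (D <= C)%VS -> Supp D \subset Supp C.
Proof.
move=> /subvP sDC; apply/subsetP => i; rewrite !inE => /existsP[x /andP[Dx xi]].
by apply/existsP; exists x; rewrite sDC.
Qed.

Lemma Supp_full_dual_unit D i : Supp D = [set: 'I_n] -> ~~ in_dual D (indv [set i]).
Proof.
move=> SD; apply/negP => /in_dualP Di.
have : i \in Supp D by rewrite SD.
rewrite inE => /existsP[x /andP[/Di]].
by rewrite dot_indv big_set1 => ->; rewrite eqxx.
Qed.

Lemma Supp_full_dim_gt0 D : (0 < n)%N -> Supp D = [set: 'I_n] -> (0 < \dim D)%N.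
Proof.
move=> n_gt0 SD; rewrite lt0n dimv_eq0; apply/eqP => D0.
have : Ordinal n_gt0 \in Supp D by rewrite SD in_setT.
by rewrite D0 inE => /existsP[x /andP[]]; rewrite memv0 => /eqP ->; rewrite mxE eqxx.
Qed.

Lemma covering_dim_le C D :
  (0 < n)%N -> (D <= C)%VS -> Supp D = [set: 'I_n] ->
  exists2 r, covering_dim C r & (r <= \dim D)%N.
Proof.
move=> n_gt0 sDC SD.
pose covering (r : nat) := exists E, [/\ (E <= C)%VS, \dim E = r & Supp E = [set: 'I_n]].
have [r [[[E [sEC dimE SE]] r_min] _]] :=
  @dec_inh_nat_subset_has_unique_least_element covering (fun r => classic (covering r))
    (ex_intro covering _ (ex_intro _ D (And3 sDC erefl SD))).
exists r; last by apply/leP/r_min; exists D.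
split; last by move=> E' sE'C _ SE'; apply/leP/r_min; exists E'.
- by apply/eqP; rewrite eqEsubset subsetT -SD Supp_subset.
- by rewrite -dimE Supp_full_dim_gt0.
- by exists E.
Qed.

End CoveringDimension.

Lemma big_set3 (R : nmodType) p (F : 'I_p -> R) a b c :
  a != b -> a != c -> b != c -> \sum_(j in [set a; b; c]) F j = F a + F b + F c.
Proof.
move=> ab ac bc; rewrite -setUA big_setU1 /=; last by rewrite !inE negb_or ab ac.
by rewrite big_setU1 ?inE //= big_set1 addrA.
Qed.

Lemma add_closed_cols_onto m p (G : 'M['F_2]_(m, p)) :
  \rank G = m -> (forall a b, a != b -> exists c, col a G + col b G = col c G) ->
  forall v : 'cV['F_2]_m, v != 0 -> exists j, col j G = v.
Proof.
move=> rankG G_add v v_neq0.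
have /submxP[u vG] : (v^T <= G^T)%MS by rewrite submx_full // /row_full mxrank_tr rankG.
have : v^T = 0 \/ exists j, v^T = row j G^T.
  rewrite vG mulmx_sum_row; apply: (big_ind (fun w => w = 0 \/ exists j, w = row j G^T)).
  - by left.
  - move=> _ _ [-> | [a ->]] [-> | [b ->]]; rewrite ?addr0 ?add0r; try by [left | right; eexists].
    have [-> | ab] := eqVneq a b; first by left; apply: addmx_F2.
    by have [c Gc] := G_add a b ab; right; exists c; rewrite -!tr_col -raddfD Gc.
  - move=> j _; have [-> | /F2_neq0_eq1 ->] := eqVneq (u 0 j) 0; first by left; rewrite scale0r.
    by right; exists j; rewrite scale1r.
case=> [vT0 | [j vGj]]; first by move: v_neq0; rewrite -[v]trmxK vT0 trmx0 eqxx.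
by exists j; apply: trmx_inj; rewrite vGj tr_col.
Qed.

Section SteinerDual.
Variable n : nat.
Implicit Types (C D H : {vspace 'rV['F_2]_n}) (y : 'rV['F_2]_n).

Definition steiner_dual C :=
  forall a b : 'I_n, a != b ->
    exists c, [/\ c != a, c != b & in_dual C (indv [set a; b; c])].

(* Adding weight-3 dual words of C to a dual word of a subcode D strictly
   decreases its weight until a weight-1 dual word of D is reached. *)
Lemma steiner_dual_unit C D y :
  steiner_dual C -> (D <= C)%VS -> in_dual D y -> ~~ in_dual C y ->
  exists i, in_dual D (indv [set i]).
Proof.
move=> SC sDC; have [m] := ubnP (wt y); elim: m y => // m IH y wy Dy Cy.
have y_neq0 : y != 0 by apply: contraNneq Cy => ->; apply: in_dual0.
have [wy_le1 | wy_gt1] := leqP (wt y) 1.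
  have /cards1P[i si] : #|supp y| == 1%N by rewrite eqn_leq wy_le1 lt0n wt_eq0.
  by exists i; rewrite -si indv_supp.
have /card_gt1P[a [b [ya yb ab]]] := wy_gt1.
have [c [ca cb Cw]] := SC a b ab; set w := indv [set a; b; c].
have Dyw : in_dual D (y + w) := in_dualD Dy (in_dualS sDC Cw).
have Cyw : ~~ in_dual C (y + w).
  by apply: contra Cy => Cyw; rewrite -[y]addr0 -(addmx_F2 w) addrA in_dualD.
have y1 j : j \in supp y -> y 0 j = 1 by rewrite inE => /F2_neq0_eq1.
have sub : supp (y + w) \subset c |: (supp y :\: [set a; b]).
  apply/subsetP => j; rewrite !inE !mxE !inE.
  case: (eqVneq j c) => //= _.
  case: (eqVneq j a) => [-> | _]; first by rewrite y1 // addrr_pchar2 ?pchar_Fp ?eqxx.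
  case: (eqVneq j b) => [-> | _]; first by rewrite y1 // addrr_pchar2 ?pchar_Fp ?eqxx.
  by rewrite addr0.
have wyw : (wt (y + w) < wt y)%N.
  apply: leq_ltn_trans (subset_leq_card sub) _.
  rewrite cardsU1 cardsD (setIidPr _); last by rewrite subUset !sub1set ya yb.
  have -> : #|[set a; b]| = 2%N by rewrite cards2 ab.
  by move: (c \notin _) wy_gt1; rewrite /wt; move: #|supp y| => k [] /=; clear; lia.
exact: IH (leq_trans wyw wy) Dyw Cyw.
Qed.

Lemma cards3_le (T : finType) (a b c : T) : (#|[set a; b; c]| <= 3)%N.
Proof. by rewrite -setUA !cardsU1 cards1; case: (a \notin _); case: (b \notin _). Qed.

Lemma steiner_dual_min_dist_le3 C d :
  dual_min_dist C d -> (1 < n)%N -> steiner_dual C -> (d <= 3)%N.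
Proof.
move=> dC n_gt1 SC; have /card_gt1P[a [b [_ _ ab]]] : (1 < #|[set: 'I_n]|)%N.
  by rewrite cardsT card_ord.
have [c [_ _ Cabc]] := SC a b ab; have abc_a : a \in [set a; b; c] by rewrite !inE eqxx.
exact: leq_trans (dual_indv_card dC Cabc abc_a) (cards3_le a b c).
Qed.

Lemma steiner_dual_dim_le C D :
  steiner_dual C -> (D <= C)%VS -> Supp D = [set: 'I_n] -> (\dim C <= \dim D)%N.
Proof.
move=> SC sDC SD; rewrite leqNgt; apply/negP => ltDC.
have [y [Dy Cy]] := in_dual_strict ltDC.
have [i] := steiner_dual_unit SC sDC Dy Cy.
by apply/negP; apply: Supp_full_dual_unit.
Qed.

Lemma dual_Hamming_steiner C H : dual_Hamming H -> mon_equiv C H -> steiner_dual C.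
Proof.
move=> [m [G [_ -> G_neq0 G_inj G_onto]]] [s Cs] a b ab.
pose a' := (s^-1)%g a; pose b' := (s^-1)%g b.
have ab' : a' != b' by rewrite (inj_eq perm_inj).
have [c' Gc'] : exists c', col c' G = col a' G + col b' G.
  apply: G_onto; apply: contra ab' => /eqP Gab; apply/eqP/G_inj => /=.
  by rewrite -[col a' G]addr0 -(addmx_F2 (col b' G)) addrA Gab add0r.
have ca : s c' != a.
  apply: contra (G_neq0 b') => /eqP sc'a.
  have c'a : c' = a' by rewrite /a' -sc'a permK.
  by move: Gc'; rewrite c'a -{1}[col a' G]addr0 => /addrI <-.
have cb : s c' != b.
  apply: contra (G_neq0 a') => /eqP sc'b.
  have c'b : c' = b' by rewrite /b' -sc'b permK.
  by move: Gc'; rewrite c'b addrC -{1}[col b' G]addr0 => /addrI <-.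
exists (s c'); split => //; apply/in_dualP => x Cx.
have /submxP[u xG] : (permute s x <= G)%MS by rewrite -row_space_span_rows -Cs.
have xs j : x 0 (s j) = (u *m col j G) 0 0.
  by move/rowP/(_ j): xG; rewrite mxE => ->; rewrite !mxE; apply: eq_bigr => l _; rewrite mxE.
rewrite dot_indv big_set3 ?[_ == s c']eq_sym //.
have addE M N : (u *m M) 0 0 + (u *m N) 0 0 = (u *m (M + N)) 0 0.
  by rewrite mulmxDr [RHS]mxE.
by rewrite -(permKV s a) -(permKV s b) !xs !addE -Gc' addmx_F2 mulmx0 mxE.
Qed.

Lemma steiner_dual_Hamming C :
  dual_min_dist C 3 -> steiner_dual C -> exists H, dual_Hamming H /\ mon_equiv C H.
Proof.
move=> dC SC; pose G := basis_mx C.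
exists <<[seq row i G | i : 'I_(\dim C)]>>%VS; split; last first.
  exists 1%g => x; rewrite row_space_span_rows -row_space_basis_mx; congr (_ \in C).
  by apply/rowP => j; rewrite mxE perm1.
have dual_G B : in_dual C (indv B) = (\sum_(j in B) col j G == 0).
  exact: in_dual_indv_cols (row_space_basis_mx C).
have G_neq0 j : col j G != 0.
  apply/negP => /eqP Gj0; have := dual_indv_card dC _ (set11 j).
  by rewrite dual_G big_set1 Gj0 eqxx cards1 => /(_ isT).
have G_inj : injective (fun j => col j G).
  move=> a b /= Gab; apply/eqP/contraT => ab.
  have := dual_indv_card dC _ (setU11 a [set b]).
  by rewrite dual_G big_setU1 ?inE //= big_set1 Gab addmx_F2 eqxx cards2 ab => /(_ isT).
have G_add a b : a != b -> exists c, col a G + col b G = col c G.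
  move=> ab; have [c [ca cb]] := SC a b ab; rewrite dual_G big_set3 ?[_ == c]eq_sym // => /eqP G0.
  by exists c; rewrite -[LHS]addr0 -(addmx_F2 (col c G)) addrA G0 add0r.
have G_onto := add_closed_cols_onto (rank_basis_mx C) G_add.
exists (\dim C), G; split => //.
have cols : [set col j G | j : 'I_n] = [set~ 0].
  apply/setP => v; rewrite !inE; apply/imsetP/idP => [[j _ ->] // | /G_onto[j <-]].
  by exists j.
by rewrite -[n in n = _]card_ord -(card_imset _ G_inj) cols cardsC1 card_mx card_Fp // muln1 subn1.
Qed.

End SteinerDual.

Section FullWeightDual.
Variable n : nat.
Implicit Types (C D : {vspace 'rV['F_2]_n}).

Lemma dual_min_dist_full_dim C : dual_min_dist C n -> (\dim C).+1 = n.
Proof.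
move=> dC; have [y0 [Cy0 y0_neq0 _]] := exists_dual_min_weight dC.
pose K := dual_mx C.
have sK : (K <= indv [set: 'I_n])%MS.
  apply/row_subP => i; have [-> | y_neq0] := eqVneq (row i K) 0; first exact: sub0mx.
  have Cy : in_dual C (row i K) by rewrite in_dual_mxE row_sub.
  have outT j : j \notin [set: 'I_n] -> row i K 0 j = 0 by rewrite in_setT.
  have cardT : (#|[set: 'I_n]| <= n)%N by rewrite cardsT card_ord.
  by have [-> _] := dual_supported_in dC Cy y_neq0 outT cardT.
have rankK_ge1 : (1 <= \rank K)%N.
  by apply: leq_trans (mxrankS (_ : y0 <= K)%MS); rewrite ?rank_rV ?y0_neq0 -?in_dual_mxE.
have rankK_le1 : (\rank K <= 1)%N by rewrite (leq_trans (mxrankS sK)) ?rank_leq_row.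
by move: rankK_ge1 rankK_le1 (dim_leq_n C); rewrite rank_dual_mx; lia.
Qed.

Lemma dual_all_ones_dim_ge2 C D :
  odd n -> in_dual C (indv [set: 'I_n]) -> (D <= C)%VS -> Supp D = [set: 'I_n] ->
  (2 <= \dim D)%N.
Proof.
move=> odd_n C1 sDC SD; have D_gt0 := Supp_full_dim_gt0 (odd_gt0 odd_n) SD.
rewrite ltn_neqAle D_gt0 andbT; apply/eqP => dimD1.
pose v := vpick D.
have Dv : D = <[v]>%VS.
  apply/esym/eqP; rewrite -(dimv_leqif_eq _).2 -?memvE ?memv_pick //.
  by rewrite dim_vline -dimD1 vpick0 -dimv_eq0 -dimD1.
have v1 : v = indv [set: 'I_n].
  rewrite -(indv_supp v); congr indv; apply/setP => i; rewrite !inE.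
  have : i \in Supp D by rewrite SD in_setT.
  rewrite inE Dv => /existsP[x /andP[/vlineP[a ->]]].
  by rewrite mxE; apply: contraNneq => ->; rewrite mulr0.
have /in_dualP/(_ v) : in_dual D (indv [set: 'I_n]) by apply: in_dualS C1.
by rewrite memv_pick v1 dot_indvv cardsT card_ord odd_n => /(_ isT) /eqP.
Qed.

End FullWeightDual.

Section DualCompletion.
Variable n : nat.
Implicit Types (C D : {vspace 'rV['F_2]_n}).

Definition dual_completes C d :=
  forall A : {set 'I_n}, #|A| = d.-1 -> exists2 i, i \notin A & in_dual C (indv (i |: A)).

(* Complete the set [c |: A0], where c lies outside the support B0 of a
   minimum-weight dual word and A0 is a (d-2)-subset of B0: the sum of the two
   dual words is supported on [(B0 :\: A0) :|: [set c; i]], of size at most 4. *)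
Lemma dual_completes_full_length C d :
  dual_min_dist C d -> (5 <= d)%N -> dual_completes C d -> d = n.
Proof.
move=> dC d_ge5 compl; apply/eqP; rewrite eqn_leq (dual_min_dist_leq dC) leqNgt.
apply/negP => lt_dn; have [y0 [Cy0 _ wy0]] := exists_dual_min_weight dC.
set B0 := supp y0 in wy0.
have [c] : exists c, c \in ~: B0.
  by apply/card_gt0P; have := cardsC B0; rewrite card_ord wy0; lia.
rewrite inE => cB0.
have [A0 sA0B0 cardA0] : exists2 A0 : {set 'I_n}, A0 \subset B0 & #|A0| = (d - 2)%N.
  by apply: exists_subset_card; rewrite wy0 leq_subr.
have cA0 : c \notin A0 by apply: contra cB0; apply: (subsetP sA0B0).
have cardA : #|c |: A0| = d.-1 by rewrite cardsU1 cA0 cardA0 add1n; lia.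
have [i iA Cw] := compl _ cardA; set w := y0 + indv (i |: (c |: A0)).
have w_neq0 : w != 0.
  apply/eqP => /rowP/(_ c)/eqP; rewrite !mxE !inE eqxx orbT.
  by move: cB0; rewrite inE negbK => /eqP ->; rewrite add0r.
have sub : supp w \subset (B0 :\: A0) :|: [set c; i].
  apply/subsetP => j; rewrite !inE !mxE !inE.
  case: (eqVneq j c) => _; rewrite ?orbT //=; case: (eqVneq j i) => _; rewrite ?orbT //=.
  case: (boolP (j \in A0)) => [jA0 | _]; last by rewrite addr0 orbF.
  have /F2_neq0_eq1 -> : y0 0 j != 0 by move: (subsetP sA0B0 _ jA0); rewrite inE.
  by rewrite addrr_pchar2 ?pchar_Fp ?eqxx.
have card_sub : (#|(B0 :\: A0) :|: [set c; i]| <= 4)%N.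
  rewrite cardsU (leq_trans (leq_subr _ _)) // cardsD (setIidPr sA0B0) wy0 cardA0.
  by rewrite subKn ?(leq_trans _ d_ge5) // cards2; case: (c != i).
have wt_w := dual_min_dist_le dC (in_dualD Cy0 Cw) w_neq0.
by have := leq_trans d_ge5 (leq_trans wt_w (leq_trans (subset_leq_card sub) card_sub)).
Qed.

Definition exceptional_code C k d :=
  (exists H, dual_Hamming H /\ mon_equiv C H) \/ [/\ k.+1 = n, d = n & odd n].

Lemma dual_completes_exceptional C d :
  dual_min_dist C d -> (3 <= d)%N -> odd d -> dual_completes C d ->
  exceptional_code C (\dim C) d.
Proof.
move=> dC d_ge3 odd_d compl; have [d3 | d_neq3] := eqVneq d 3%N.
  left; apply: steiner_dual_Hamming; first by rewrite -d3.
  move=> a b ab; have [|i] := compl [set a; b]; first by rewrite cards2 ab d3.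
  rewrite !inE negb_or => /andP[ia ib] Ci.
  by exists i; split; rewrite // setUC.
have d_ge5 : (5 <= d)%N by move: d_ge3 d_neq3 odd_d; clear dC compl; case: d => [|[|[|[|[]]]]].
have dn := dual_completes_full_length dC d_ge5 compl.
right; split => //; last by rewrite -dn.
by apply: dual_min_dist_full_dim; rewrite -{2}dn.
Qed.

End DualCompletion.

Section CoveringBounds.
Variable n : nat.
Implicit Types (C D : {vspace 'rV['F_2]_n}).

Lemma covering_constant_part C d (A : {set 'I_n}) :
  dual_min_dist C d -> (0 < #|A| < d)%N ->
  (forall i, i \notin A -> in_dual C (indv (i |: A)) -> ~~ odd #|i |: A|) ->
  exists D, [/\ (D <= C)%VS, (\dim D + #|A| <= \dim C + 1)%N & Supp D = [set: 'I_n]].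
Proof.
move=> dC /andP[/card_gt0P[a0 a0A] ltAd] even_ext.
exists (constant_part A a0 C); split; first exact: capvSl.
  exact: dim_constant_part dC a0A ltAd.
exact: Supp_constant_part dC a0A ltAd even_ext.
Qed.

Lemma covering_dim_upper C d :
  dual_min_dist C d -> (3 <= d)%N ->
  exists D, [/\ (D <= C)%VS, (\dim D + d <= \dim C + 3)%N & Supp D = [set: 'I_n]].
Proof.
move=> dC d_ge3; have dn := dual_min_dist_leq dC.
have [A cardA] : exists A : {set 'I_n}, #|A| = (d - 2)%N.
  by apply: exists_set_card; rewrite card_ord (leq_trans (leq_subr 2 d) dn).
have [D [sDC dimD SD]] :
    exists D, [/\ (D <= C)%VS, (\dim D + #|A| <= \dim C + 1)%N & Supp D = [set: 'I_n]].
  apply: (covering_constant_part dC); first by rewrite cardA; apply/andP; split; lia.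
  move=> i iA /(dual_indv_card dC)/(_ (setU11 i A)).
  by rewrite cardsU1 iA cardA add1n; lia.
by exists D; split => //; move: dimD; rewrite cardA; lia.
Qed.

Lemma covering_dim_upper_strict C d :
  dual_min_dist C d -> (3 <= d)%N -> ~ exceptional_code C (\dim C) d ->
  exists D, [/\ (D <= C)%VS, (\dim D + d <= \dim C + 2)%N & Supp D = [set: 'I_n]].
Proof.
move=> dC d_ge3 not_exc.
have [A cardA even_ext] : exists2 A : {set 'I_n}, #|A| = d.-1 &
    forall i, i \notin A -> in_dual C (indv (i |: A)) -> ~~ odd #|i |: A|.
  have [odd_d | even_d] := boolP (odd d).
    apply: NNPP => no_A; apply/not_exc/(dual_completes_exceptional dC d_ge3 odd_d) => A cardA.
    apply: NNPP => no_i; apply: no_A; exists A => // i iA Ci.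
    by case: no_i; exists i.
  have [A cardA] : exists A : {set 'I_n}, #|A| = d.-1.
    by apply: exists_set_card; rewrite card_ord (leq_trans (leq_pred d) (dual_min_dist_leq dC)).
  exists A => // i iA _; rewrite cardsU1 iA cardA add1n prednK //.
  by apply: leq_trans d_ge3.
have [D [sDC dimD SD]] :
    exists D, [/\ (D <= C)%VS, (\dim D + #|A| <= \dim C + 1)%N & Supp D = [set: 'I_n]].
  by apply: (covering_constant_part dC _ even_ext); rewrite cardA; apply/andP; split; lia.
by exists D; split => //; move: dimD; rewrite cardA; lia.
Qed.

Lemma exceptional_covering_dim_ge C d D :
  dual_min_dist C d -> (3 <= d)%N -> exceptional_code C (\dim C) d ->
  (D <= C)%VS -> Supp D = [set: 'I_n] -> (\dim C + 3 <= \dim D + d)%N.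
Proof.
move=> dC d_ge3 [[H [HH CH]] | [dimC dn odd_n]] sDC SD.
  have SC := dual_Hamming_steiner HH CH.
  have n_gt1 : (1 < n)%N by apply: ltnW; apply: leq_trans d_ge3 (dual_min_dist_leq dC).
  have d_le3 := steiner_dual_min_dist_le3 dC n_gt1 SC.
  by have := steiner_dual_dim_le SC sDC SD; lia.
have [y0 [Cy0 _ wy0]] := exists_dual_min_weight dC.
have y0_1 : y0 = indv [set: 'I_n].
  rewrite -(indv_supp y0); congr indv; apply/eqP.
  by rewrite eqEcard subsetT cardsT card_ord wy0 dn /=.
have := dual_all_ones_dim_ge2 odd_n (_ : in_dual C _) sDC SD.
by rewrite -y0_1 => /(_ Cy0); lia.
Qed.

End CoveringBounds.

Theorem mainTheorem9 (n k d : nat) (C : {vspace 'rV['F_2]_n}) :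
  \dim C = k ->
  (exists y, in_dual C y /\ (y != 0)%R) ->
  dual_min_dist C d ->
  (3 <= d)%N ->
  let special :=
    (exists H : {vspace 'rV['F_2]_n}, dual_Hamming H /\ mon_equiv C H) \/
    [/\ k.+1 = n, d = n & odd n] in
  (special -> exists r, covering_dim C r /\ (r + d = k + 3)%N) /\
  (~ special -> exists r, covering_dim C r /\ (r + d <= k + 2)%N).
Proof.
move=> <- _ dC d_ge3 special.
have n_gt0 : (0 < n)%N by apply: leq_trans (dual_min_dist_leq dC); apply: leq_trans d_ge3.
split => [exc | not_exc].
  have [D0 [sD0C dimD0 SD0]] := covering_dim_upper dC d_ge3.
  have [r covr le_r] := covering_dim_le n_gt0 sD0C SD0.
  exists r; split => //; have [_ _ [D [sDC dimD SD]] _] := covr.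
  by have := exceptional_covering_dim_ge dC d_ge3 exc sDC SD; lia.
have [D [sDC dimD SD]] := covering_dim_upper_strict dC d_ge3 not_exc.
have [r covr le_r] := covering_dim_le n_gt0 sDC SD.
by exists r; split => //; lia.
Qed.
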